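(* Let $(V,\langle\cdot,\cdot\rangle)$ be a pseudo-Euclidean real vector space of signature $(k,l)$ with $k\ge2$, $l\ge2$, and let $Z\subseteq V$ be a subspace. The following are equivalent: (i) $q^+(Z)=k$; (ii) every positive $(k-1)$-plane $H\subseteq V$ is $Z$-extendable; (iii) every positive $(k-1)$-plane $H\subseteq V$ is $Z$-orthogonally-extendable.
   Context: A pseudo-Euclidean space of signature $(k,l)$ is a finite-dimensional real vector space with a symmetric non-degenerate bilinear form whose Sylvester diagonal form has $k$ entries $+1$ and $l$ entries $-1$. For a subspace $L$, $q^+(L)$ denotes the number of $+1$'s in a diagonalization of the restriction of the form to $L$, and $L^\perp$ is the orthogonal complement. A positive $r$-plane is an $r$-dimensional subspace on which the form is positive definite. For a subspace $Z$ and a positive $(k-1)$-plane $H$: $H$ is $Z$-extendable if there is $z\in Z$ with $H+\mathbb{R}z$ a positive $k$-plane; $H$ is $Z$-orthogonally-extendable if there is $z\in Z\cap H^\perp$ with $H+\mathbb{R}z$ a positive $k$-plane. *)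

(* A pseudo-Euclidean space of signature (k,l) is modelled as
   'rV[R]_n over a real field R, with bilinear form (u,v) |-> u G v^T for a
   symmetric invertible matrix G.  Subspaces are row spaces of matrices. *)
From HB Require Import structures.
From mathcomp Require Import all_boot all_order all_algebra.
Set Implicit Arguments. Unset Strict Implicit. Unset Printing Implicit Defensive.
Import Order.TTheory GRing.Theory Num.Theory.
Local Open Scope ring_scope.

Section PE.
Variables (R : realFieldType) (n : nat).

Definition bform (G : 'M[R]_n) (u v : 'rV[R]_n) : R := (u *m G *m v^T) 0 0.

Definition npos m (D : 'M[R]_m) : nat := #|[set i : 'I_m | 0 < D i i]|.
Definition nneg m (D : 'M[R]_m) : nat := #|[set i : 'I_m | D i i < 0]|.

Definition pseudo_euclidean (G : 'M[R]_n) (k l : nat) : Prop :=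
  [/\ G^T = G, G \in unitmx &
      exists B : 'M[R]_n, [/\ B \in unitmx, is_diag_mx (B *m G *m B^T),
                               npos (B *m G *m B^T) = k &
                               nneg (B *m G *m B^T) = l]].

Definition qplus_is m (G : 'M[R]_n) (L : 'M[R]_(m, n)) (p : nat) : Prop :=
  exists B : 'M[R]_(\rank L, n),
    [/\ (B == L)%MS, is_diag_mx (B *m G *m B^T) & npos (B *m G *m B^T) = p].

Definition pos_def_on m (G : 'M[R]_n) (L : 'M[R]_(m, n)) : Prop :=
  forall v : 'rV[R]_n, (v <= L)%MS -> v != 0 -> 0 < bform G v v.

Definition pos_plane m (G : 'M[R]_n) (r : nat) (L : 'M[R]_(m, n)) : Prop :=
  \rank L = r /\ pos_def_on G L.

Definition extendable m1 m2 (G : 'M[R]_n) (k : nat)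
    (Z : 'M[R]_(m1, n)) (H : 'M[R]_(m2, n)) : Prop :=
  exists z : 'rV[R]_n, (z <= Z)%MS /\ pos_plane G k (H + z)%MS.

Definition orth_extendable m1 m2 (G : 'M[R]_n) (k : nat)
    (Z : 'M[R]_(m1, n)) (H : 'M[R]_(m2, n)) : Prop :=
  exists z : 'rV[R]_n,
    [/\ (z <= Z)%MS,
        (forall h : 'rV[R]_n, (h <= H)%MS -> bform G h z = 0) &
        pos_plane G k (H + z)%MS].

End PE.

From HB Require Import structures.
From mathcomp Require Import all_boot all_order all_algebra zify.
Set Implicit Arguments. Unset Strict Implicit. Unset Printing Implicit Defensive.
Import Order.TTheory GRing.Theory Num.Theory.
Local Open Scope ring_scope.

(* Diagonalising the form on a basis B, the rows with positive diagonal entry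
   span a positive plane P and the others a nonpositive space N with
   B = P + N.  Since a positive subspace meets N trivially, the signature
   bounds every positive subspace by k, and every positive subspace extends,
   one orthogonal vector at a time, to a positive plane of any dimension up
   to k.
   (i) -> (iii): a positive k-plane inside Z is too big to be orthogonal to
   the (k-1)-plane H, so it contains a vector y orthogonal to H, and
   H + Ry is positive.
   (ii) -> (i): if q^+(Z) < k, extend the positive part P of Z to a positive
   (k-1)-plane H.  For z = x + w in Z = P + N, the vector w = z - x lies in
   H + Rz and is nonpositive, so positivity of H + Rz forces w = 0; then z
   lies in H and H + Rz is not a k-plane. *)

Local Notation rowsub f := (mxsub f id).

Lemma row_free_rowsub (F : fieldType) m m' n (f : 'I_m' -> 'I_m) (A : 'M[F]_(m, n)) :
  injective f -> row_free A -> row_free (rowsub f A).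
Proof.
move=> injf freeA; rewrite rowsubE /row_free mxrankMfree //; apply/row_freeP.
exists (rowsub f 1%:M)^T; rewrite mul_rowsub_mx mul1mx trmx_mxsub trmx1 -mxsubrc.
by apply/matrixP => i j; rewrite !mxE (inj_eq injf).
Qed.

Lemma mxsub_diag (F : ringType) m m' (f : 'I_m' -> 'I_m) (A : 'M[F]_m) :
  injective f -> is_diag_mx A -> mxsub f f A = diag_mx (\row_j A (f j) (f j)).
Proof.
move=> injf /is_diag_mxP diagA; apply/matrixP => i j; rewrite !mxE.
have [-> | ij] := eqVneq i j; rewrite ?mulr1n // mulr0n diagA //.
by rewrite (inj_eq val_inj) (inj_eq injf).
Qed.

Lemma mxsub_gram (F : ringType) m m' n (f : 'I_m' -> 'I_m) (A : 'M[F]_(m, n)) G :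
  mxsub f f (A *m G *m A^T) = rowsub f A *m G *m (rowsub f A)^T.
Proof. by rewrite mxsub_mul -mul_rowsub_mx trmx_mxsub. Qed.

Section BilinearForm.
Variables (R : realFieldType) (n : nat) (G : 'M[R]_n).
Hypothesis symG : G^T = G.
Local Notation b := (bform G).

Lemma bformC u v : b u v = b v u.
Proof.
rewrite /bform; transitivity ((u *m G *m v^T)^T 0 0); first by rewrite [RHS]mxE.
by rewrite !trmx_mul trmxK symG mulmxA.
Qed.

Lemma bformDl u v w : b (u + v) w = b u w + b v w.
Proof. by rewrite /bform !mulmxDl mxE. Qed.

Lemma bformDr u v w : b w (u + v) = b w u + b w v.
Proof. by rewrite /bform linearD /= mulmxDr mxE. Qed.

Lemma bformZl a u w : b (a *: u) w = a * b u w.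
Proof. by rewrite /bform -!scalemxAl mxE. Qed.

Lemma bformZr a u w : b w (a *: u) = a * b w u.
Proof. by rewrite /bform linearZ /= -scalemxAr mxE. Qed.

Lemma bform0l w : b 0 w = 0.
Proof. by rewrite /bform !mul0mx mxE. Qed.

Lemma gram_entry m1 m2 (A : 'M[R]_(m1, n)) (C : 'M[R]_(m2, n)) i j :
  (A *m G *m C^T) i j = b (row i A) (row j C).
Proof.
by rewrite /bform -row_mul [LHS]mxE [RHS]mxE; apply: eq_bigr => k _; rewrite !mxE.
Qed.

Definition nonpos_on m (L : 'M[R]_(m, n)) :=
  forall v : 'rV[R]_n, (v <= L)%MS -> b v v <= 0.

Lemma pos_nonpos_cap0 m1 m2 (P : 'M[R]_(m1, n)) (N : 'M[R]_(m2, n)) :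
  pos_def_on G P -> nonpos_on N -> (P :&: N)%MS = 0.
Proof.
move=> posP nonposN; apply/eqP; rewrite -nz_row_eq0; apply: contraT => nz.
have := nz_row_sub (P :&: N)%MS; rewrite sub_capmx => /andP[vP vN].
by have := lt_le_trans (posP _ vP nz) (nonposN _ vN); rewrite ltxx.
Qed.

Lemma exists_orth_sub m1 m2 (P : 'M[R]_(m1, n)) (H : 'M[R]_(m2, n)) :
  (\rank H < \rank P)%N ->
  exists2 y : 'rV[R]_n, (y <= P)%MS /\ y != 0 &
    forall h, (h <= H)%MS -> b h y = 0.
Proof.
move=> ltHP; set M := row_base P *m G *m H^T.
have rankM : (\rank M <= \rank H)%N.
  by rewrite (leq_trans (mxrankM_maxr _ _)) ?mxrank_tr.
have nzK : kermx M != 0 by rewrite -mxrank_eq0 mxrank_ker; lia.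
set c := nz_row (kermx M).
have cM : c *m M = 0 by apply/sub_kermxP; exact: nz_row_sub.
exists (c *m row_base P); first split.
- by rewrite (submx_trans (submxMl _ _)) // eq_row_base.
- apply: contra nzK => /eqP cP0; rewrite -nz_row_eq0 -/c; apply/eqP.
  by apply: (row_free_inj (row_base_free P)); rewrite cP0 mul0mx.
- move=> h /submxP[a ->]; rewrite bformC /bform trmx_mul.
  have -> : c *m row_base P *m G *m (H^T *m a^T) = c *m M *m a^T.
    by rewrite /M !mulmxA.
  by rewrite cM !mul0mx mxE.
Qed.

Lemma rank_adds_orth m (H : 'M[R]_(m, n)) y :
  (forall h, (h <= H)%MS -> b h y = 0) -> b y y != 0 ->
  \rank (H + y)%MS = (\rank H).+1.
Proof.
move=> orthHy yy_nz.
have y_nz : y != 0 by apply: contraNneq yy_nz => ->; rewrite bform0l.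
suff capHy : (H :&: y)%MS = 0 by rewrite mxrank_disjoint_sum // rank_rV y_nz addn1.
apply/eqP; rewrite -nz_row_eq0; apply: contraT => nz.
have := nz_row_sub (H :&: y)%MS; rewrite sub_capmx => /andP[vH /sub_rVP[a va]].
move: (orthHy _ vH); rewrite va bformZl => /eqP; rewrite mulf_eq0 (negbTE yy_nz) orbF.
by move=> /eqP a0; move: nz; rewrite va a0 scale0r eqxx.
Qed.

Lemma pos_def_adds_orth m (H : 'M[R]_(m, n)) y :
  pos_def_on G H -> (forall h, (h <= H)%MS -> b h y = 0) -> 0 < b y y ->
  pos_def_on G (H + y)%MS.
Proof.
move=> posH orthHy yy_gt0 v /sub_addsmxP[[u w] /= ->].
rewrite [w]mx11_scalar mul_scalar_mx; set c := w 0 0; set h := u *m H => nz.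
have hH : (h <= H)%MS by exact: submxMl.
rewrite bformDl !bformDr !bformZl !bformZr orthHy // [b y h]bformC orthHy //.
rewrite !mulr0 addr0 add0r mulrA -expr2.
have [h0 | h_nz] := eqVneq h 0.
  rewrite h0 bform0l add0r mulr_gt0 // exprn_even_gt0 //=.
  by apply: contraNneq nz => ->; rewrite h0 scale0r addr0.
by rewrite ltr_wpDr ?posH // mulr_ge0 ?sqr_ge0 ?ltW.
Qed.

Lemma pos_plane_adds_orth m1 m2 (H : 'M[R]_(m1, n)) (P : 'M[R]_(m2, n)) :
  pos_def_on G H -> pos_def_on G P -> (\rank H < \rank P)%N ->
  exists2 y : 'rV[R]_n, (y <= P)%MS /\ (forall h, (h <= H)%MS -> b h y = 0) &
    pos_plane G (\rank H).+1 (H + y)%MS.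
Proof.
move=> posH posP ltHP; have [y [yP y_nz] orthHy] := exists_orth_sub ltHP.
have yy_gt0 := posP y yP y_nz.
exists y => //; split; last exact: pos_def_adds_orth.
by rewrite rank_adds_orth ?gt_eqF.
Qed.

Lemma exists_anisotropic m (L : 'M[R]_(m, n)) :
  L *m G *m L^T != 0 -> exists2 e : 'rV[R]_n, (e <= L)%MS & b e e != 0.
Proof.
move=> gram_nz.
have /existsP[i /existsP[j nz]] : [exists i, exists j, b (row i L) (row j L) != 0].
  apply: contraNT gram_nz => /existsPn ij0; apply/eqP/matrixP => i j.
  rewrite gram_entry mxE; apply/eqP.
  by have /existsPn/(_ j) := ij0 i; rewrite negbK.
have [ii | ii] := eqVneq (b (row i L) (row i L)) 0.
  2: by exists (row i L); rewrite ?row_sub.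
have [jj | jj] := eqVneq (b (row j L) (row j L)) 0.
  2: by exists (row j L); rewrite ?row_sub.
(* Polarisation: both diagonal values vanish, so b (u + v) (u + v) = 2 b u v. *)
exists (row i L + row j L); first by rewrite addmx_sub ?row_sub.
rewrite bformDl !bformDr ii jj [b (row j L) _]bformC add0r addr0.
by rewrite -mulr2n mulrn_eq0.
Qed.

Lemma exists_orth_complement m (L : 'M[R]_(m, n)) e :
  (e <= L)%MS -> b e e != 0 ->
  exists2 L' : 'M[R]_(m, n), (L' + e == L)%MS & forall v, (v <= L')%MS -> b v e = 0.
Proof.
move=> eL ee_nz; set q := b e e; set E := L *m G *m e^T *m e.
(* Each row v of L is replaced by v - (b v e / b e e) e. *)
pose L' := L - q^-1 *: E.
have eGe : e *m G *m e^T = q%:M by rewrite [LHS]mx11_scalar.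
have L'Ge : L' *m G *m e^T = 0.
  rewrite /L' !mulmxBl -!scalemxAl.
  have -> : E *m G *m e^T = L *m G *m e^T *m (e *m G *m e^T) by rewrite !mulmxA.
  by rewrite eGe mul_mx_scalar scalerA mulVf // scale1r subrr.
have Ee : (E <= e)%MS by exact: submxMl.
exists L'.
  rewrite addsmx_sub addmx_sub ?eqmx_opp ?scalemx_sub ?(submx_trans Ee) //= eL.
  apply: submx_trans (addmx_sub_adds (submx_refl L') (_ : (q^-1 *: E <= e)%MS)).
    by rewrite /L' subrK.
  by rewrite scalemx_sub.
move=> v /submxP[a ->]; rewrite /bform -!mulmxA (mulmxA L') L'Ge.
by rewrite mulmx0 mxE.
Qed.

Lemma exists_diag_basis m (L : 'M[R]_(m, n)) :
  exists B : 'M[R]_(\rank L, n), (B == L)%MS /\ is_diag_mx (B *m G *m B^T).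
Proof.
suff diag_rank r : forall m' (L' : 'M[R]_(m', n)), \rank L' = r ->
    exists B : 'M[R]_(r, n), (B == L')%MS /\ is_diag_mx (B *m G *m B^T).
  exact: diag_rank.
elim: r => [|r IHr] {}m {}L rankL.
  have /eqP L0 : L == 0 by rewrite -mxrank_eq0 rankL.
  by exists 0; rewrite !mul0mx mx0_is_diag L0 /= !sub0mx.
have [gram0 | /exists_anisotropic[e eL ee_nz]] :=
  eqVneq (row_base L *m G *m (row_base L)^T) 0.
  rewrite -rankL; exists (row_base L); rewrite gram0 mx0_is_diag.
  by split=> //; apply/eqmxP/eq_row_base.
have {}eL : (e <= L)%MS by rewrite -(eq_row_base L).
have [L' /eqmxP L'eL orthL'e] := exists_orth_complement eL ee_nz.
have rankL' : \rank L' = r.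
  by apply: succn_inj; rewrite -(rank_adds_orth orthL'e ee_nz) L'eL.
have [B' [/eqmxP B'L' diagB']] := IHr _ L' rankL'.
suff [B BL] : exists B : 'M[R]_(1 + r, n), (B == L)%MS /\ is_diag_mx (B *m G *m B^T).
  by exists B.
exists (col_mx e B'); split.
  apply/eqmxP; apply: eqmx_trans (eqmx_sym (addsmxE e B')) (eqmx_trans _ L'eL).
  by rewrite addsmxC; apply: adds_eqmx.
rewrite tr_col_mx mul_col_mx mul_col_row is_diag_block_mx // mx11_is_diag diagB' !andbT.
have orthB'e j : b (row j B') e = 0 by rewrite orthL'e // -B'L' row_sub.
have row_e (i : 'I_1) : row i e = e by apply/rowP => j; rewrite !mxE ord1.
apply/andP; split; apply/eqP/matrixP => i j; rewrite gram_entry mxE row_e //.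
by rewrite bformC.
Qed.

Section DiagonalGram.
Variables (m : nat) (B : 'M[R]_(m, n)).
Hypotheses (freeB : row_free B) (diagB : is_diag_mx (B *m G *m B^T)).
Local Notation D := (B *m G *m B^T).

Definition gram_part (p : pred R) :=
  rowsub (enum_val : 'I_#|[set i | p (D i i)]| -> 'I_m) B.

Lemma gram_part_diag p (j : 'I_#|[set i | p (D i i)]|) :
  p (D (enum_val j) (enum_val j)).
Proof. by have := enum_valP j; rewrite inE. Qed.

Lemma bform_gram_part p a :
  b (a *m gram_part p) (a *m gram_part p) =
  \sum_j a 0 j ^+ 2 * D (enum_val j) (enum_val j).
Proof.
rewrite /bform trmx_mul.
have -> : a *m gram_part p *m G *m ((gram_part p)^T *m a^T) =
    a *m (gram_part p *m G *m (gram_part p)^T) *m a^T by rewrite !mulmxA.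
rewrite -mxsub_gram mxsub_diag //; last exact: enum_val_inj.
rewrite mul_mx_diag mxE; apply: eq_bigr => j _; by rewrite !mxE mulrAC expr2.
Qed.

Lemma rank_gram_part p : \rank (gram_part p) = #|[set i | p (D i i)]|.
Proof. by apply/eqP; apply: row_free_rowsub freeB; exact: enum_val_inj. Qed.

Lemma gram_part_cover p : (B <= gram_part p + gram_part (predC p))%MS.
Proof.
apply/row_subP => i; have [pi | npi] := boolP (p (D i i)).
  have iA : i \in [set i | p (D i i)] by rewrite inE.
  apply: submx_trans (addsmxSl _ _); rewrite -(enum_rankK_in iA iA).
  by rewrite -row_rowsub row_sub.
have iA : i \in [set i | predC p (D i i)] by rewrite inE.
apply: submx_trans (addsmxSr _ _); rewrite -(enum_rankK_in iA iA).
by rewrite -row_rowsub row_sub.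
Qed.

Lemma pos_def_gram_part : pos_def_on G (gram_part (fun x => 0 < x)).
Proof.
move=> v /submxP[a ->] nz; rewrite bform_gram_part.
have term_ge0 j : 0 <= a 0 j ^+ 2 * D (enum_val j) (enum_val j).
  by rewrite mulr_ge0 ?sqr_ge0 ?ltW ?gram_part_diag.
rewrite lt0r sumr_ge0 // andbT; apply: contraNneq nz => /eqP.
rewrite psumr_eq0 // => /allP a0; suff -> : a = 0 by rewrite mul0mx.
apply/rowP => j; have /implyP/(_ isT) := a0 j (mem_index_enum j).
by rewrite mulf_eq0 (gt_eqF (gram_part_diag j)) orbF sqrf_eq0 mxE => /eqP.
Qed.

Lemma nonpos_gram_part : nonpos_on (gram_part (predC (fun x => 0 < x))).
Proof.
move=> v /submxP[a ->]; rewrite bform_gram_part; apply: sumr_le0 => j _.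
by rewrite mulr_ge0_le0 ?sqr_ge0 // leNgt; exact: (gram_part_diag j).
Qed.

End DiagonalGram.

Lemma diag_gram_split m (B : 'M[R]_(m, n)) :
  row_free B -> is_diag_mx (B *m G *m B^T) ->
  exists P N : 'M[R]_n,
    [/\ (P + N == B)%MS, pos_def_on G P, nonpos_on N,
        \rank P = npos (B *m G *m B^T) & \rank N = (m - npos (B *m G *m B^T))%N].
Proof.
move=> freeB diagB; set pos := fun x : R => 0 < x.
exists <<gram_part B pos>>%MS, <<gram_part B (predC pos)>>%MS.
rewrite !genmxE !rank_gram_part //; split.
- apply/andP; split; first by rewrite addsmx_sub !genmxE !rowsub_sub.
  by apply: submx_trans (gram_part_cover B pos) _; rewrite addsmxS ?genmxE.
- by move=> v; rewrite genmxE; exact: pos_def_gram_part.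
- by move=> v; rewrite genmxE; exact: nonpos_gram_part.
- by [].
- have := cardsC [set i | pos ((B *m G *m B^T) i i)].
  rewrite card_ord => /(canRL (addKn _)) <-.
  by apply: eq_card => i; rewrite !inE.
Qed.

Lemma sub_of_pos_def_adds m1 m2 m3 (H : 'M[R]_(m1, n)) (P : 'M[R]_(m2, n))
    (N : 'M[R]_(m3, n)) (z : 'rV[R]_n) :
  (P <= H)%MS -> nonpos_on N -> (z <= P + N)%MS -> pos_def_on G (H + z)%MS ->
  (z <= H)%MS.
Proof.
move=> PH nonposN /sub_addsmxP[[u w] /= zE] posHz.
have xH : (u *m P <= H)%MS by exact: submx_trans (submxMl _ _) PH.
have [y0 | y_nz] := eqVneq (w *m N) 0; first by rewrite zE y0 addr0.
have yE : w *m N = z - u *m P by rewrite zE addrC addKr.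
have yHz : (w *m N <= H + z)%MS.
  by rewrite yE addmx_sub ?addsmxSr // eqmx_opp (submx_trans xH) ?addsmxSl.
by have := lt_le_trans (posHz _ yHz y_nz) (nonposN _ (submxMl _ _)); rewrite ltxx.
Qed.
End BilinearForm.

Section Signature.
Variables (R : realFieldType) (n : nat) (G : 'M[R]_n) (k l : nat).
Hypothesis sigG : pseudo_euclidean G k l.

Let symG : G^T = G. Proof. by case: sigG. Qed.

Lemma sylvester_split :
  exists P N : 'M[R]_n,
    [/\ pos_def_on G P, nonpos_on G N, \rank P = k & \rank N = (n - k)%N].
Proof.
case: sigG => _ _ [B [unitB diagB <- _]].
have freeB : row_free B by rewrite row_free_unit.
have [P [N [_ posP nonposN rankP rankN]]] := diag_gram_split freeB diagB.
by exists P, N.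
Qed.

Lemma pos_def_rank_le m (P : 'M[R]_(m, n)) : pos_def_on G P -> (\rank P <= k)%N.
Proof.
move=> posP; have [Q [N [_ nonposN rankQ rankN]]] := sylvester_split.
have := mxrank_disjoint_sum (pos_nonpos_cap0 posP nonposN).
have := rank_leq_col (P + N)%MS; have := rank_leq_col Q; lia.
Qed.

Lemma exists_pos_plane : exists P : 'M[R]_n, pos_plane G k P.
Proof. by have [P [_ [posP _ rankP _]]] := sylvester_split; exists P. Qed.

Lemma pos_def_extend m (H : 'M[R]_(m, n)) r :
  pos_def_on G H -> (\rank H <= r <= k)%N ->
  exists2 H' : 'M[R]_n, pos_plane G r H' & (H <= H')%MS.
Proof.
move=> posH; elim: r => [|r IHr] /andP[Hr rk].
  have /eqP H0 : H == 0 by rewrite -mxrank_eq0 -leqn0.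
  exists 0; last by rewrite H0 sub0mx.
  by split=> [|v]; rewrite ?mxrank0 // submx0 => /eqP ->; rewrite eqxx.
have [rankH | ltHr] := eqVneq (\rank H) r.+1.
  exists <<H>>%MS; last by rewrite genmxE.
  by split=> [|v]; rewrite genmxE //; exact: posH.
have [H1 [rankH1 posH1] HH1] : exists2 H1 : 'M[R]_n, pos_plane G r H1 & (H <= H1)%MS.
  by apply: IHr; rewrite -ltnS ltn_neqAle ltHr Hr ltnW.
have [V [rankV posV]] := exists_pos_plane.
have ltH1V : (\rank H1 < \rank V)%N by rewrite rankH1 rankV.
have [y _ planeH1y] := pos_plane_adds_orth symG posH1 posV ltH1V.
by exists (H1 + y)%MS; rewrite -?rankH1 // (submx_trans HH1) ?addsmxSl.
Qed.

Lemma orth_extendable_of_qplus m (Z : 'M[R]_n) (H : 'M[R]_(m, n)) :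
  (0 < k)%N -> qplus_is G Z k -> pos_plane G k.-1 H -> orth_extendable G k Z H.
Proof.
move=> k_gt0 [B [BZ diagB nposB]] [rankH posH].
have freeB : row_free B by rewrite /row_free (eqmxP BZ).
have [P [N [/andP[PNB _] posP _ rankP _]]] := diag_gram_split freeB diagB.
have ltHP : (\rank H < \rank P)%N by rewrite rankH rankP nposB prednK.
have [y [yP orthHy] planeHy] := pos_plane_adds_orth symG posH posP ltHP.
exists y; split => //; last by rewrite -(prednK k_gt0) -rankH.
have PZ : (P <= Z)%MS by rewrite -(eqmxP BZ) (submx_trans (addsmxSl P N) PNB).
exact: submx_trans yP PZ.
Qed.

Lemma qplus_of_extendable (Z : 'M[R]_n) :
  (0 < k)%N -> (forall H : 'M[R]_n, pos_plane G k.-1 H -> extendable G k Z H) ->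
  qplus_is G Z k.
Proof.
move=> k_gt0 ext; have [B [BZ diagB]] := exists_diag_basis symG Z.
have freeB : row_free B by rewrite /row_free (eqmxP BZ).
have [P [N [/andP[_ BPN] posP nonposN rankP _]]] := diag_gram_split freeB diagB.
exists B; split=> //; rewrite -rankP; apply/eqP; rewrite eqn_leq pos_def_rank_le //=.
rewrite leqNgt; apply/negP => ltPk.
have rankP_le : (\rank P <= k.-1 <= k)%N by lia.
have [H [rankH posH] PH] := pos_def_extend posP rankP_le.
have [z [zZ [rankHz posHz]]] := ext H (conj rankH posH).
have zPN : (z <= P + N)%MS by rewrite (submx_trans zZ) // -(eqmxP BZ).
have zH := sub_of_pos_def_adds PH nonposN zPN posHz.
by move: rankHz; rewrite (addsmx_idPl zH) rankH; lia.
Qed.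

End Signature.

Theorem proposition3 (R : realFieldType) (n : nat) (G : 'M[R]_n) (k l : nat)
    (Z : 'M[R]_n) :
  pseudo_euclidean G k l -> (2 <= k)%N -> (2 <= l)%N ->
  (qplus_is G Z k <->
     (forall H : 'M[R]_n, pos_plane G k.-1 H -> extendable G k Z H)) /\
  (qplus_is G Z k <->
     (forall H : 'M[R]_n, pos_plane G k.-1 H -> orth_extendable G k Z H)).
Proof.
move=> sigG k_ge2 _; have k_gt0 : (0 < k)%N := ltnW k_ge2.
have orth_ext_ext (H : 'M[R]_n) : orth_extendable G k Z H -> extendable G k Z H.
  by case=> z [zZ _ planeHz]; exists z.
split; split=> [qZ H planeH | ext].
- exact/orth_ext_ext/(orth_extendable_of_qplus sigG k_gt0 qZ).
- exact: (qplus_of_extendable sigG k_gt0 ext).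
- exact: (orth_extendable_of_qplus sigG k_gt0 qZ planeH).
- by apply: (qplus_of_extendable sigG k_gt0) => H /ext/orth_ext_ext.
Qed.
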